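(* Let $G$ be a graph and $k\in\mathbb N$. Every principal tangle of order $k$ in $G$ is a robust principal $k$-profile.
   Context: A separation of $G$ is an ordered pair $(A,B)$ of subsets of $V(G)$ with $A\cup B=V(G)$ and no edge between $A\setminus B$ and $B\setminus A$; its order is $|A\cap B|$. $(A,B)\le(C,D)$ means $A\subseteq C$, $D\subseteq B$. A principal tangle of order $k$ is a set $\theta$ of separations of order at most $k-1$ such that: ($\theta$1) for all $(A_1,B_1),(A_2,B_2),(A_3,B_3)\in\theta$, $G\neq G[A_1]\cup G[A_2]\cup G[A_3]$; ($\theta$2) for every set $X$ of fewer than $k$ vertices there is a component $C$ of $G-X$ with $(V(G)\setminus C,C\cup X)\in\theta$; ($\theta$3) for every separation $(A,B)$ of order at most $k-1$, $(A,B)\in\theta$ or $(B,A)\in\theta$. A profile is a set $P$ of separations with (P1) if $(C,D)\le(A,B)\in P$ then $(D,C)\notin P$, and (P2) if $(A,B),(C,D)\in P$ then $(B\cap D,A\cup C)\notin P$. $P$ is principal if for every family $((A_i,B_i))_{i\in I}$ in $P$ with all $A_i\cap B_i$ equal, $\bigcap_i(B_i\setminus A_i)\neq\emptyset$; a $k$-profile if all its separations have order $<k$ and for each separation $(A,B)$ of order $<k$, $(A,B)\in P$ or $(B,A)\in P$; robust if for every $(A,B)\in P$ and every separation $(C,D)$ of finite order, if $(B\cap C,A\cup D)$, $(B\cap D,A\cup C)$ both have order $<|A\cap B|$ then one of them is not in $P$. *)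

(* Graphs on an arbitrary (possibly infinite) vertex type V,
   given by a symmetric irreflexive adjacency relation E.  Vertex sets are
   predicates V -> Prop. *)
From Stdlib Require Import List Relations.

Section Defs.
Variables (V : Type) (E : V -> V -> Prop).

Definition vset := V -> Prop.

Definition is_sep (A B : vset) : Prop :=
  (forall v, A v \/ B v) /\
  (forall u v, A u -> ~ B u -> B v -> ~ A v -> ~ E u v).

Definition card_lt_nat (X : vset) (n : nat) : Prop :=
  exists l : list V, (forall x, X x <-> In x l) /\ length l < n.

Definition order_lt (A B : vset) (n : nat) : Prop :=
  card_lt_nat (fun x => A x /\ B x) n.

Definition finite_order (A B : vset) : Prop :=
  exists l : list V, forall x, A x /\ B x <-> In x l.

Definition card_lt (S T : vset) : Prop :=
  (exists f : {x | S x} -> {y | T y}, forall a b, f a = f b -> a = b) /\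
  ~ (exists g : {y | T y} -> {x | S x}, forall a b, g a = g b -> a = b).

Definition is_component (X C : vset) : Prop :=
  exists u, ~ X u /\
    forall v, C v <-> clos_refl_trans V (fun a b => E a b /\ ~ X a /\ ~ X b) u v.

Definition sepset := vset -> vset -> Prop.

Definition principal_tangle (k : nat) (th : sepset) : Prop :=
  (forall A B, th A B -> is_sep A B /\ order_lt A B k) /\
  (forall A1 B1 A2 B2 A3 B3, th A1 B1 -> th A2 B2 -> th A3 B3 ->
     ~ ((forall v, A1 v \/ A2 v \/ A3 v) /\
        (forall u v, E u v ->
           (A1 u /\ A1 v) \/ (A2 u /\ A2 v) \/ (A3 u /\ A3 v)))) /\
  (forall X : vset, card_lt_nat X k ->
     exists C, is_component X C /\ th (fun v => ~ C v) (fun v => C v \/ X v)) /\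
  (forall A B, is_sep A B -> order_lt A B k -> th A B \/ th B A).

Definition sep_le (C D A B : vset) : Prop :=
  (forall x, C x -> A x) /\ (forall x, B x -> D x).

Definition profile (P : sepset) : Prop :=
  (forall A B, P A B -> is_sep A B) /\
  (forall A B C D, P A B -> sep_le C D A B -> ~ P D C) /\
  (forall A B C D, P A B -> P C D ->
     ~ P (fun x => B x /\ D x) (fun x => A x \/ C x)).

Definition principal (P : sepset) : Prop :=
  forall (I : Type) (As Bs : I -> vset),
    inhabited I ->
    (forall i, P (As i) (Bs i)) ->
    (forall i j x, (As i x /\ Bs i x) <-> (As j x /\ Bs j x)) ->
    exists v, forall i, Bs i v /\ ~ As i v.

Definition k_profile (k : nat) (P : sepset) : Prop :=
  (forall A B, P A B -> order_lt A B k) /\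
  (forall A B, is_sep A B -> order_lt A B k -> P A B \/ P B A).

Definition robust (P : sepset) : Prop :=
  forall A B C D, P A B -> is_sep C D -> finite_order C D ->
    card_lt (fun x => (B x /\ C x) /\ (A x \/ D x)) (fun x => A x /\ B x) ->
    card_lt (fun x => (B x /\ D x) /\ (A x \/ C x)) (fun x => A x /\ B x) ->
    ~ P (fun x => B x /\ C x) (fun x => A x \/ D x) \/
    ~ P (fun x => B x /\ D x) (fun x => A x \/ C x).

End Defs.

(* Every axiom of a profile, and robustness, is an instance of (θ1): in each
   case the separations that are supposed not to lie together in θ have small
   sides whose induced subgraphs cover G.  For principality, take the component
   C of G - X given by (θ2) for the common separator X; a separation (A, B)
   with separator X that does not have the root of C in B \ A would contain C
   in A, and then A together with V \ C (twice) would cover G. *)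
From Stdlib Require Import Relations Classical.

Section Separations.
Variables (V : Type) (E : V -> V -> Prop).
Hypothesis E_sym : forall u v, E u v -> E v u.

Definition covers3 (A1 A2 A3 : vset V) : Prop :=
  (forall v, A1 v \/ A2 v \/ A3 v) /\
  (forall u v, E u v -> (A1 u /\ A1 v) \/ (A2 u /\ A2 v) \/ (A3 u /\ A3 v)).

Lemma sep_vertex_side (A B : vset V) v : is_sep V E A B -> A v \/ B v.
Proof. intros [Hcover _]. apply Hcover. Qed.

Lemma sep_edge_side (A B : vset V) u v :
  is_sep V E A B -> E u v -> (A u /\ A v) \/ (B u /\ B v).
Proof.
  intros HAB He. destruct HAB as [Hcover Hnoedge].
  destruct (classic (A u /\ A v)) as [HA | HA]; [now left | right].
  destruct (classic (A u)) as [Au | nAu].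
  - assert (nAv : ~ A v) by tauto.
    assert (Bv : B v) by (destruct (Hcover v); tauto).
    split; [| exact Bv].
    destruct (classic (B u)) as [Bu | nBu]; [exact Bu |].
    exfalso. exact (Hnoedge u v Au nBu Bv nAv He).
  - assert (Bu : B u) by (destruct (Hcover u); tauto).
    split; [exact Bu |].
    destruct (classic (B v)) as [Bv | nBv]; [exact Bv |].
    assert (Av : A v) by (destruct (Hcover v); tauto).
    exfalso. exact (Hnoedge v u Av nBv Bu nAu (E_sym u v He)).
Qed.

Lemma covers3_sep_corner (A B C D : vset V) :
  is_sep V E A B -> is_sep V E C D ->
  covers3 A C (fun x => B x /\ D x).
Proof.
  intros HAB HCD. split.
  - intro v. destruct (sep_vertex_side A B v HAB), (sep_vertex_side C D v HCD);
    tauto.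
  - intros u v He.
    destruct (sep_edge_side A B u v HAB He), (sep_edge_side C D u v HCD He);
    tauto.
Qed.

Lemma covers3_sep_refine (A B C D : vset V) :
  is_sep V E A B -> is_sep V E C D ->
  covers3 A (fun x => B x /\ C x) (fun x => B x /\ D x).
Proof.
  intros HAB HCD. split.
  - intro v. destruct (sep_vertex_side A B v HAB), (sep_vertex_side C D v HCD);
    tauto.
  - intros u v He.
    destruct (sep_edge_side A B u v HAB He), (sep_edge_side C D u v HCD He);
    tauto.
Qed.

Lemma covers3_sep_le (A B C D : vset V) :
  is_sep V E D C -> sep_le V C D A B -> covers3 A D D.
Proof.
  intros HDC [HCA _]. split.
  - intro v. destruct (sep_vertex_side D C v HDC); auto.
  - intros u v He. destruct (sep_edge_side D C u v HDC He) as [? | [? ?]]; auto.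
Qed.

(* A path of G - (A ∩ B) cannot leave A, since every edge leaving A has an
   end in A ∩ B. *)
Lemma path_avoiding_separator_stays (A B X : vset V) u v :
  is_sep V E A B -> (forall x, A x -> B x -> X x) ->
  clos_refl_trans V (fun a b => E a b /\ ~ X a /\ ~ X b) u v -> A u -> A v.
Proof.
  intros HAB HABX Hpath.
  induction Hpath as [a b [He [nXa _]] | | ]; auto.
  intro Aa. destruct (sep_edge_side A B a b HAB He) as [[_ Ab] | [Ba _]];
  [exact Ab | exfalso; exact (nXa (HABX a Aa Ba))].
Qed.

Lemma component_edge_closed (X C : vset V) u v :
  is_component V E X C -> C u -> E u v -> ~ X v -> C v.
Proof.
  intros [r [nXr HC]] Cu He nXv. apply HC in Cu. apply HC.
  apply rt_trans with u; [exact Cu |]. apply rt_step. repeat split; auto.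
  intro Xu. apply clos_rt_rtn1 in Cu.
  destruct Cu as [| a b [_ [_ nXb]] _]; auto.
Qed.

Lemma component_outside_covered (X C A : vset V) :
  is_component V E X C -> (forall x, X x -> A x) -> (forall x, C x -> A x) ->
  covers3 A (fun v => ~ C v) (fun v => ~ C v).
Proof.
  intros HC HXA HCA.
  assert (Hnbr : forall u v, C u -> E u v -> A v).
  { intros u v Cu He. destruct (classic (X v)) as [Xv | nXv]; auto.
    apply HCA. exact (component_edge_closed X C u v HC Cu He nXv). }
  split.
  - intro v. destruct (classic (C v)); auto.
  - intros u v He. destruct (classic (C u)) as [Cu | nCu].
    + left. split; [apply HCA | apply (Hnbr u)]; auto.
    + destruct (classic (C v)) as [Cv | nCv]; [| tauto].
      left. split; [apply (Hnbr v); auto | apply HCA; auto].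
Qed.

End Separations.

Section Tangle.
Variables (V : Type) (E : V -> V -> Prop).
Hypothesis E_sym : forall u v, E u v -> E v u.
Variables (k : nat) (th : sepset V).
Hypothesis th_tangle : principal_tangle V E k th.

Lemma tangle_sep A B : th A B -> is_sep V E A B.
Proof. intro HAB. apply (proj1 th_tangle), HAB. Qed.

Lemma tangle_order_lt A B : th A B -> order_lt V A B k.
Proof. intro HAB. apply (proj1 th_tangle), HAB. Qed.

Lemma tangle_not_covers3 A1 B1 A2 B2 A3 B3 :
  th A1 B1 -> th A2 B2 -> th A3 B3 -> ~ covers3 V E A1 A2 A3.
Proof. apply (proj1 (proj2 th_tangle)). Qed.

Lemma tangle_profile : profile V E th.
Proof.
  split; [exact tangle_sep | split].
  - intros A B C D HAB Hle HDC.
    apply (tangle_not_covers3 _ _ _ _ _ _ HAB HDC HDC).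
    exact (covers3_sep_le V E E_sym A B C D (tangle_sep D C HDC) Hle).
  - intros A B C D HAB HCD Hcorner.
    apply (tangle_not_covers3 _ _ _ _ _ _ HAB HCD Hcorner).
    exact (covers3_sep_corner V E E_sym A B C D (tangle_sep A B HAB)
             (tangle_sep C D HCD)).
Qed.

Lemma tangle_principal : principal V th.
Proof.
  intros I As Bs [i0] Hth Hsame.
  set (X := fun x => As i0 x /\ Bs i0 x).
  destruct (proj1 (proj2 (proj2 th_tangle)) X (tangle_order_lt _ _ (Hth i0)))
    as [C [HC HthC]].
  pose proof HC as [r [nXr Hreach]].
  exists r. intro i.
  assert (HXi : forall x, X x <-> As i x /\ Bs i x) by (intro; apply Hsame).
  assert (nAr : ~ As i r).
  { intro Ar.
    assert (HCA : forall v, C v -> As i v).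
    { intros v Cv. apply Hreach in Cv.
      apply (path_avoiding_separator_stays V E E_sym (As i) (Bs i) X r v);
      auto; [apply tangle_sep, Hth | intros x Ax Bx; apply HXi; auto]. }
    apply (tangle_not_covers3 _ _ _ _ _ _ (Hth i) HthC HthC).
    apply (component_outside_covered V E E_sym X C); auto.
    intros x Hx. apply HXi, Hx. }
  destruct (sep_vertex_side V E (As i) (Bs i) r (tangle_sep _ _ (Hth i))); tauto.
Qed.

Lemma tangle_k_profile : k_profile V E k th.
Proof. split; [exact tangle_order_lt | apply th_tangle]. Qed.

Lemma tangle_robust : robust V E th.
Proof.
  intros A B C D HAB HCD _ _ _.
  apply not_and_or. intros [HBC HBD].
  apply (tangle_not_covers3 _ _ _ _ _ _ HAB HBC HBD).
  exact (covers3_sep_refine V E E_sym A B C D (tangle_sep A B HAB) HCD).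
Qed.

End Tangle.

Theorem proposition6p5 (V : Type) (E : V -> V -> Prop)
  (E_sym : forall u v, E u v -> E v u) (E_irr : forall v, ~ E v v)
  (k : nat) (th : sepset V) :
  principal_tangle V E k th ->
  profile V E th /\ principal V th /\ k_profile V E k th /\ robust V E th.
Proof.
  intro Hth. split; [| split; [| split]].
  - exact (tangle_profile V E E_sym k th Hth).
  - exact (tangle_principal V E E_sym k th Hth).
  - exact (tangle_k_profile V E k th Hth).
  - exact (tangle_robust V E E_sym k th Hth).
Qed.
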